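(* A sequence $\mathfrak{f}\in\mathfrak{M}_4$ belongs to $\mathfrak{S}_4$ if and only if $$\mathfrak{f}=\alpha_{11}\mathfrak{p}_{(1^4)}+2\alpha_{12}\mathfrak{p}_{(2,1^2)}+\alpha_{22}\mathfrak{p}_{(2^2)}+\beta_{11}\left(\mathfrak{p}_{(2,1^2)}-\mathfrak{p}_{(1^4)}\right)+2\beta_{12}\left(\mathfrak{p}_{(3,1)}-\mathfrak{p}_{(2,1^2)}\right)+\beta_{22}\left(\mathfrak{p}_{(4)}-\mathfrak{p}_{(2^2)}\right)$$ for some real numbers such that $\begin{pmatrix}\alpha_{11}&\alpha_{12}\\ \alpha_{12}&\alpha_{22}\end{pmatrix}$ and $\begin{pmatrix}\beta_{11}&\beta_{12}\\ \beta_{12}&\beta_{22}\end{pmatrix}$ are positive semidefinite.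
   Context: $p^{(n)}_i=\frac1n(x_1^i+\dots+x_n^i)$, $p^{(n)}_\lambda=\prod_i p^{(n)}_{\lambda_i}$ for a partition $\lambda$ of $4$. For $\lambda\vdash 4$, $\mathfrak{p}_\lambda$ denotes the sequence $(p^{(4)}_\lambda,p^{(5)}_\lambda,\dots)$, and $\mathfrak{M}_4$ is the 5-dimensional real vector space of sequences $\mathfrak{f}=\sum_{\lambda\vdash4}c_\lambda\mathfrak{p}_\lambda$, i.e. $\mathfrak{f}=(f^{(n)})_{n\ge4}$ with $f^{(n)}=\sum_\lambda c_\lambda p^{(n)}_\lambda$. $\mathfrak{S}_4$ is the set of $\mathfrak{f}\in\mathfrak{M}_4$ such that $f^{(n)}$ is a sum of squares of real forms for every $n\ge 4$. *)

From HB Require Import structures.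
From mathcomp Require Import all_boot all_order all_algebra.
From mathcomp Require Import reals.
From mathcomp Require Import mpoly.

Set Implicit Arguments.
Unset Strict Implicit.
Unset Printing Implicit Defensive.

Import Order.TTheory GRing.Theory Num.Theory.
Local Open Scope ring_scope.

Inductive part4 : Type := P4 | P31 | P22 | P211 | P1111.

Section Defs.
Variable R : realType.

Definition psum (n i : nat) : {mpoly R[n]} :=
  (n%:R)^-1 *: \sum_(j < n) ('X_j) ^+ i.

Definition ppart (n : nat) (l : part4) : {mpoly R[n]} :=
  match l with
  | P4 => psum n 4
  | P31 => psum n 3 * psum n 1
  | P22 => psum n 2 * psum n 2
  | P211 => psum n 2 * psum n 1 * psum n 1
  | P1111 => psum n 1 * psum n 1 * psum n 1 * psum n 1
  end.

(* an element f = sum_lambda c_lambda p_lambda of M_4, given by its coefficient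
   vector c; its n-th term f^{(n)} : *)
Definition fseq (c : part4 -> R) (n : nat) : {mpoly R[n]} :=
  c P4 *: ppart n P4 + c P31 *: ppart n P31 + c P22 *: ppart n P22
  + c P211 *: ppart n P211 + c P1111 *: ppart n P1111.

Definition sos_forms (n : nat) (p : {mpoly R[n]}) : Prop :=
  exists s : seq {mpoly R[n]},
    (forall g, g \in s -> exists d : nat, g \is d.-homog) /\
    p = \sum_(g <- s) g ^+ 2.

Definition inS4 (c : part4 -> R) : Prop :=
  forall n : nat, (4 <= n)%N -> sos_forms (fseq c n).

Definition seq_eq (c c' : part4 -> R) : Prop :=
  forall n : nat, (4 <= n)%N -> fseq c n = fseq c' n.

Definition psd2 (M : 'M[R]_2) : Prop :=
  M^T = M /\ forall v : 'cV[R]_2, 0 <= (v^T *m M *m v) 0 0.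

Definition sym2 (a b d : R) : 'M[R]_2 :=
  \matrix_(i < 2, j < 2)
    (if (i == 0 :> nat) && (j == 0 :> nat) then a
     else if (i == 1 :> nat) && (j == 1 :> nat) then d else b).

(* coefficient vector of
   a11 p_(1^4) + 2 a12 p_(2,1^2) + a22 p_(2^2) + b11 (p_(2,1^2) - p_(1^4))
   + 2 b12 (p_(3,1) - p_(2,1^2)) + b22 (p_(4) - p_(2^2)) *)
Definition combo (a11 a12 a22 b11 b12 b22 : R) (l : part4) : R :=
  match l with
  | P4 => b22
  | P31 => 2 * b12
  | P22 => a22 - b22
  | P211 => 2 * a12 + b11 - 2 * b12
  | P1111 => a11 - b11
  end.

End Defs.

(* (<=) For positive semidefinite Gram matrices A and B the identity
     f^(n) = [p1^2, p2] A [p1^2, p2]^T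
             + 1/n * sum_j [p1 (x_j - p1), x_j^2 - p2] B [p1 (x_j - p1), x_j^2 - p2]^T
   writes f^(n) as a sum of psd binary quadratic forms in quadratic forms, and
   each of these is a sum of two squares (Cholesky).
   (=>) Evaluating f^(n) at points whose first k coordinates equal x1 and the
   others x2 shows, by density of the ratios k/n and continuity, that f is
   nonnegative on every two-point distribution.  In terms of the mean m, the
   variance r and the sum s of the two atoms this value is a polynomial
   [reduced_form]; its nonnegativity for all s and r >= 0 gives, by minimising
   first in s and then in r, a value t for which both Gram matrices are psd. *)

From HB Require Import structures.
From mathcomp Require Import all_boot all_order all_algebra.
From mathcomp Require Import reals mpoly.
From mathcomp Require Import ring lra.
From mathcomp Require Import polyrcf.

Set Implicit Arguments.
Unset Strict Implicit.
Unset Printing Implicit Defensive.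

Import Order.TTheory GRing.Theory Num.Theory.
Local Open Scope ring_scope.

Section PSD2.
Variable R : realType.
Implicit Types a b d : R.

Lemma sym2_form a b d (v : 'cV[R]_2) :
  (v^T *m sym2 a b d *m v) 0 0 =
  a * v ord0 0 ^+ 2 + 2 * b * v ord0 0 * v ord_max 0 + d * v ord_max 0 ^+ 2.
Proof.
rewrite !mxE !big_ord_recr !big_ord0 /= !mxE !big_ord_recr !big_ord0 /= !mxE /=.
have -> : widen_ord (leqnSn 1) (@ord_max 0) = ord0 :> 'I_2 by apply/val_inj.
by rewrite /=; ring.
Qed.

Lemma trmx_sym2 a b d : (sym2 a b d)^T = sym2 a b d.
Proof.
apply/matrixP => i j; rewrite !mxE.
by case: i => [[|[|i]] Hi] //; case: j => [[|[|j]] Hj].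
Qed.

Definition col2 (x y : R) : 'cV[R]_2 := \col_(i < 2) (if i == 0 :> nat then x else y).

Lemma sym2_form_col2 a b d x y :
  ((col2 x y)^T *m sym2 a b d *m col2 x y) 0 0 = a * x ^+ 2 + 2 * b * x * y + d * y ^+ 2.
Proof. by rewrite sym2_form !mxE. Qed.

Lemma psd2_sym2 a b d : psd2 (sym2 a b d) <-> [/\ 0 <= a, 0 <= d & b ^+ 2 <= a * d].
Proof.
split=> [[_ psd] | [a_ge0 d_ge0 discr]].
  have := psd (col2 1 0); have := psd (col2 0 1).
  have := psd (col2 d (- b)); have := psd (col2 b (- (a + 1))).
  rewrite !sym2_form_col2 => h1 h2 h3 h4.
  have a_ge0 : 0 <= a by nra.
  have d_ge0 : 0 <= d by nra.
  split=> //; have [d0|d_neq0] := eqVneq d 0.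
    rewrite d0 mulr0; move: h1; rewrite d0; nra.
  have d_gt0 : 0 < d by rewrite lt_def d_neq0.
  rewrite -subr_ge0 -(pmulr_rge0 _ d_gt0); nra.
split=> [|v]; first exact: trmx_sym2.
rewrite sym2_form; set x := v ord0 0; set y := v ord_max 0.
have [a0|a_neq0] := eqVneq a 0.
  have b0 : b = 0 by move: discr; rewrite a0 mul0r; nra.
  rewrite a0 b0; nra.
have a_gt0 : 0 < a by rewrite lt_def a_neq0.
rewrite -(pmulr_rge0 _ a_gt0).
have -> : a * (a * x ^+ 2 + 2 * b * x * y + d * y ^+ 2)
    = (a * x + b * y) ^+ 2 + (a * d - b ^+ 2) * y ^+ 2 by ring.
by apply: addr_ge0; [exact: sqr_ge0 | apply: mulr_ge0; [lra | exact: sqr_ge0]].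
Qed.

Lemma psd2_sym2_factor a b d : psd2 (sym2 a b d) ->
  exists l m k, [/\ a = l ^+ 2, b = l * m & d = m ^+ 2 + k ^+ 2].
Proof.
case/psd2_sym2 => a_ge0 d_ge0 discr.
pose l := Num.sqrt a; pose m := b / l.
have l2 : l ^+ 2 = a by rewrite sqr_sqrtr.
have [lm m2] : l * m = b /\ m ^+ 2 <= d.
  have [a0|a_neq0] := eqVneq a 0.
    have b0 : b = 0 by move: discr; rewrite a0 mul0r; nra.
    by rewrite /m b0 mul0r mulr0 expr0n.
  have l_neq0 : l != 0 by rewrite sqrtr_eq0 -ltNge lt_def a_neq0 a_ge0.
  split; first by rewrite /m mulrCA divff // mulr1.
  by rewrite /m expr_div_n l2 ler_pdivrMr ?lt_def ?a_neq0 // mulrC.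
exists l, m, (Num.sqrt (d - m ^+ 2)); split=> //.
by rewrite sqr_sqrtr ?subr_ge0 //; ring.
Qed.

End PSD2.

Lemma scale_in_alg (R : comNzRingType) (A : comAlgType R) (a : R) (x : A) :
  a *: x = in_alg A a * x.
Proof. by rewrite mulr_algl. Qed.

Lemma sqr_completion (R : comNzRingType) (A : comAlgType R) (l m k : R) (u v : A) :
  (l *: u + m *: v) ^+ 2 + (k *: v) ^+ 2 =
  l ^+ 2 *: u ^+ 2 + (2 * (l * m)) *: (u * v) + (m ^+ 2 + k ^+ 2) *: v ^+ 2.
Proof. by rewrite !scale_in_alg; ring. Qed.

Lemma sum_quartic (A : comNzRingType) (I : Type) (r : seq I) (y : I -> A)
    (c0 c1 c2 c3 c4 : A) :
  \sum_(j <- r) (c0 + c1 * y j + c2 * y j ^+ 2 + c3 * y j ^+ 3 + c4 * y j ^+ 4) =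
  c0 * \sum_(j <- r) 1 + c1 * \sum_(j <- r) y j + c2 * \sum_(j <- r) y j ^+ 2
  + c3 * \sum_(j <- r) y j ^+ 3 + c4 * \sum_(j <- r) y j ^+ 4.
Proof.
elim: r => [|j r IH]; first by rewrite !big_nil; ring.
by rewrite !big_cons IH; ring.
Qed.

Section Moments.
Variables (R : fieldType) (A : comAlgType R) (n : nat) (x : 'I_n -> A).
Hypothesis n_neq0 : n%:R != 0 :> R.

Definition pmoment (i : nat) : A := n%:R^-1 *: \sum_(j < n) x j ^+ i.

Lemma pmoment_quartic (c0 c1 c2 c3 c4 : A) :
  n%:R^-1 *: \sum_(j < n) (c0 + c1 * x j + c2 * x j ^+ 2 + c3 * x j ^+ 3 + c4 * x j ^+ 4)
  = c0 + c1 * pmoment 1 + c2 * pmoment 2 + c3 * pmoment 3 + c4 * pmoment 4.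
Proof.
rewrite sum_quartic !scalerDr -!scalerAr sumr_const card_ord.
rewrite -scaler_nat -scalerAr scalerA mulVf // scale1r mulr1.
by under [\sum_(j < n) x j]eq_bigr do rewrite -[x _]expr1.
Qed.

Local Notation p := pmoment.

Lemma centered_form_pmoment (b11 b12 b22 : R) :
  n%:R^-1 *: \sum_(j < n) (b11 *: (p 1 * (x j - p 1)) ^+ 2
      + (2 * b12) *: (p 1 * (x j - p 1) * (x j ^+ 2 - p 2))
      + b22 *: (x j ^+ 2 - p 2) ^+ 2)
  = b11 *: (p 2 * p 1 * p 1 - p 1 * p 1 * p 1 * p 1)
    + (2 * b12) *: (p 3 * p 1 - p 2 * p 1 * p 1) + b22 *: (p 4 - p 2 * p 2).
Proof.
pose B i := in_alg A i.
under eq_bigr => j _ do rewrite !scale_in_alg -/(B b11) -/(B (2 * b12)) -/(B b22).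
rewrite (eq_bigr (fun j =>
      (B b11 * p 1 ^+ 4 + B (2 * b12) * p 1 ^+ 2 * p 2 + B b22 * p 2 ^+ 2)
    + (- 2%:R * B b11 * p 1 ^+ 3 - B (2 * b12) * p 1 * p 2) * x j
    + (B b11 * p 1 ^+ 2 - B (2 * b12) * p 1 ^+ 2 - 2%:R * B b22 * p 2) * x j ^+ 2
    + B (2 * b12) * p 1 * x j ^+ 3 + B b22 * x j ^+ 4)) => [|j _]; last by ring.
by rewrite pmoment_quartic !scale_in_alg; ring.
Qed.

Lemma combo_pmoment_decomposition (a11 a12 a22 b11 b12 b22 : R) :
  b22 *: p 4 + (2 * b12) *: (p 3 * p 1) + (a22 - b22) *: (p 2 * p 2)
  + (2 * a12 + b11 - 2 * b12) *: (p 2 * p 1 * p 1)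
  + (a11 - b11) *: (p 1 * p 1 * p 1 * p 1)
  = a11 *: (p 1 ^+ 2) ^+ 2 + (2 * a12) *: (p 1 ^+ 2 * p 2) + a22 *: p 2 ^+ 2
    + n%:R^-1 *: \sum_(j < n) (b11 *: (p 1 * (x j - p 1)) ^+ 2
        + (2 * b12) *: (p 1 * (x j - p 1) * (x j ^+ 2 - p 2))
        + b22 *: (x j ^+ 2 - p 2) ^+ 2).
Proof. by rewrite centered_form_pmoment !scale_in_alg; ring. Qed.

End Moments.

Section SumsOfSquares.
Variables (R : realType) (n : nat).
Implicit Types p q : {mpoly R[n]}.

Lemma dhomogXU (j : 'I_n) : ('X_j : {mpoly R[n]}) \is 1%N.-homog.
Proof. by rewrite dhomogX; apply/eqP; exact: mdeg1. Qed.

Lemma dhomog_psum i : psum R n i \is i.-homog.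
Proof.
apply/rpredZ/rpred_sum => j _.
by have := dhomogMn i (dhomogXU j); rewrite mul1n.
Qed.

Lemma sos_formsD p q : sos_forms p -> sos_forms q -> sos_forms (p + q).
Proof.
move=> [s [hs ->]] [t [ht ->]]; exists (s ++ t); split; last by rewrite big_cat.
by move=> g; rewrite mem_cat => /orP [/hs|/ht].
Qed.

Lemma sos_forms_sum (I : Type) (r : seq I) (F : I -> {mpoly R[n]}) :
  (forall i, sos_forms (F i)) -> sos_forms (\sum_(i <- r) F i).
Proof.
move=> sosF; elim: r => [|i r IH]; last by rewrite big_cons; apply: sos_formsD.
by exists [::]; rewrite !big_nil.
Qed.

Lemma sos_formsZ (a : R) p : 0 <= a -> sos_forms p -> sos_forms (a *: p).
Proof.
move=> a_ge0 [s [hs ->]]; exists [seq Num.sqrt a *: g | g <- s]; split.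
  by move=> _ /mapP [g /hs [d hd] ->]; exists d; exact: rpredZ.
rewrite big_map scaler_sumr; apply: eq_bigr => g _.
by rewrite exprZn sqr_sqrtr.
Qed.

Lemma sos_forms_sqr (d : nat) p : p \is d.-homog -> sos_forms (p ^+ 2).
Proof.
move=> hp; exists [:: p]; split; last by rewrite big_seq1.
by move=> g; rewrite inE => /eqP ->; exists d.
Qed.

Lemma sos_forms_psd_form (a b d : R) (k : nat) p q :
  psd2 (sym2 a b d) -> p \is k.-homog -> q \is k.-homog ->
  sos_forms (a *: p ^+ 2 + (2 * b) *: (p * q) + d *: q ^+ 2).
Proof.
move=> /psd2_sym2_factor [l [m [e [-> -> ->]]]] hp hq.
by rewrite -sqr_completion; apply: sos_formsD; apply: (@sos_forms_sqr k);
  rewrite ?rpredD ?rpredZ.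
Qed.

End SumsOfSquares.

Lemma inS4_combo (R : realType) (a11 a12 a22 b11 b12 b22 : R) :
  psd2 (sym2 a11 a12 a22) -> psd2 (sym2 b11 b12 b22) ->
  inS4 (combo a11 a12 a22 b11 b12 b22).
Proof.
move=> psdA psdB n n_ge4.
have n_gt0 : (0 < n)%N by apply: leq_trans n_ge4.
have n_neq0 : n%:R != 0 :> R by rewrite pnatr_eq0 -lt0n.
pose X (j : 'I_n) : {mpoly R[n]} := 'X_j.
have hP1 : pmoment X 1 \is 1%N.-homog by exact: dhomog_psum.
have hP2 : pmoment X 2 \is 2%N.-homog by exact: dhomog_psum.
have hX j : X j \is 1%N.-homog by exact: dhomogXU.
rewrite /fseq /ppart /= -[psum R n]/(pmoment X) combo_pmoment_decomposition //.
apply: sos_formsD.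
  by apply: (sos_forms_psd_form (k := 2%N) psdA) => //; exact: (dhomogMn 2 hP1).
apply/sos_formsZ/sos_forms_sum => [|j]; first by rewrite invr_ge0 ler0n.
apply: (sos_forms_psd_form (k := 2%N) psdB).
  exact: (dhomogM hP1 (rpredB (hX j) hP1)).
by apply: rpredB hP2; exact: (dhomogMn 2 (hX j)).
Qed.

Section TwoPoint.
Variable R : realType.
Implicit Types (c : part4 -> R) (w : R).

Lemma sos_forms_meval_ge0 n (p : {mpoly R[n]}) (v : 'I_n -> R) :
  sos_forms p -> 0 <= p.@[v].
Proof.
move=> [s [_ ->]]; rewrite raddf_sum /=; apply: sumr_ge0 => g _.
by rewrite mevalM -expr2 sqr_ge0.
Qed.

Definition two_valued n k (x1 x2 : R) (j : 'I_n) : R := if (j < k)%N then x1 else x2.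

Definition two_point_moment (x1 x2 : R) w (i : nat) : R := w * x1 ^+ i + (1 - w) * x2 ^+ i.

Definition two_point_value c (x1 x2 : R) w : R :=
  let m := two_point_moment x1 x2 w in
  c P4 * m 4 + c P31 * (m 3 * m 1) + c P22 * (m 2 * m 2)
  + c P211 * (m 2 * m 1 * m 1) + c P1111 * (m 1 * m 1 * m 1 * m 1).

Lemma meval_psum_two_valued n k (x1 x2 : R) i : (0 < n)%N -> (k <= n)%N ->
  (psum R n i).@[two_valued k x1 x2] = two_point_moment x1 x2 (k%:R / n%:R) i.
Proof.
move=> n_gt0 kn; rewrite /psum mevalZ raddf_sum /=.
under eq_bigr => j _ do rewrite rmorphXn /= mevalXU /two_valued.
rewrite -(big_mkord xpredT (fun j => (if (j < k)%N then x1 else x2) ^+ i)).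
rewrite (@big_cat_nat _ _ _ k) /=; [|exact: leq0n|exact: kn].
rewrite (eq_big_nat _ _ (F2 := fun _ => x1 ^+ i)); last by move=> j /andP [_ ->].
rewrite [X in _ + X](eq_big_nat _ _ (F2 := fun _ => x2 ^+ i)); last first.
  by move=> j /andP [kj _]; rewrite ltnNge kj.
rewrite !sumr_const_nat subn0 -[x1 ^+ i *+ k]mulr_natr -[x2 ^+ i *+ _]mulr_natr.
rewrite natrB // /two_point_moment.
by field; rewrite pnatr_eq0 -lt0n.
Qed.

Lemma meval_fseq_two_valued c n k (x1 x2 : R) : (0 < n)%N -> (k <= n)%N ->
  (fseq c n).@[two_valued k x1 x2] = two_point_value c x1 x2 (k%:R / n%:R).
Proof.
move=> n_gt0 kn.
by rewrite /fseq !mevalD !(mevalZ _ (c _)) /ppart !mevalM !meval_psum_two_valued.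
Qed.

Lemma nat_ratio_approx (n0 : nat) (w d : R) : 0 <= w <= 1 -> 0 < d ->
  exists n k, [/\ (n0 <= n)%N, (k <= n)%N & `|k%:R / n%:R - w| < d].
Proof.
move=> /andP [w_ge0 w_le1] d_gt0.
pose n := (n0 + Num.bound d^-1).+1.
have n_gt0 : (0 : R) < n%:R by rewrite ltr0n.
have dn_gt1 : 1 < d * n%:R.
  have bound_lt : d^-1 < n%:R.
    apply: (lt_le_trans (archi_boundP _)); first by rewrite invr_ge0 ltW.
    by rewrite ler_nat /n ltnW // ltnS leq_addl.
  by rewrite -(ltr_pM2l d_gt0) mulfV ?gt_eqF in bound_lt.
have /andP [k_le k_gt] := truncn_itv (mulr_ge0 w_ge0 (ltW n_gt0)).
set k := Num.truncn _ in k_le k_gt.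
exists n, k; split.
- by rewrite /n ltnW // ltnS leq_addr.
- by rewrite -(ler_nat R); apply: (le_trans k_le); nra.
have -> : k%:R / n%:R - w = (k%:R - w * n%:R) / n%:R by field; rewrite gt_eqF.
rewrite normrM normfV (gtr0_norm n_gt0) ltr_pdivrMr // ler0_norm ?subr_le0 //.
by rewrite -natr1 in k_gt; lra.
Qed.

Lemma poly_ge0_on_ratios (p : {poly R}) (n0 : nat) :
  (forall n k, (n0 <= n)%N -> (k <= n)%N -> 0 <= p.[k%:R / n%:R]) ->
  forall w, 0 <= w <= 1 -> 0 <= p.[w].
Proof.
move=> p_ge0 w w01; rewrite leNgt; apply/negP => pw_lt0.
have [d d_gt0 near_w] : exists2 d, 0 < d & forall y, `|y - w| < d -> `|p.[y] - p.[w]| < - p.[w].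
  by apply: poly_cont; rewrite oppr_gt0.
have [n [k [n0n kn close]]] := nat_ratio_approx n0 w01 d_gt0.
have := near_w _ close; have := p_ge0 n k n0n kn.
by rewrite ltr_norml; lra.
Qed.

Lemma two_point_value_poly c (x1 x2 : R) :
  exists p : {poly R}, forall w, p.[w] = two_point_value c x1 x2 w.
Proof.
pose m i : {poly R} := (x2 ^+ i)%:P + (x1 ^+ i - x2 ^+ i)%:P * 'X.
have hm i w : (m i).[w] = two_point_moment x1 x2 w i.
  by rewrite /m !hornerE /two_point_moment; ring.
exists ((c P4)%:P * m 4 + (c P31)%:P * (m 3 * m 1) + (c P22)%:P * (m 2 * m 2)
  + (c P211)%:P * (m 2 * m 1 * m 1) + (c P1111)%:P * (m 1 * m 1 * m 1 * m 1)).
by move=> w; rewrite !hornerD !hornerM !hornerC !hm.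
Qed.

Lemma inS4_two_point_value_ge0 c (x1 x2 : R) w : inS4 c -> 0 <= w <= 1 ->
  0 <= two_point_value c x1 x2 w.
Proof.
move=> c_S4 w01; have [p p_val] := two_point_value_poly c x1 x2.
rewrite -p_val; apply: (poly_ge0_on_ratios (n0 := 4)) w01 => n k n_ge4 kn.
have n_gt0 : (0 < n)%N by apply: leq_trans n_ge4.
rewrite p_val -meval_fseq_two_valued //.
exact/sos_forms_meval_ge0/c_S4.
Qed.

(* The value of [fseq c] on a two-point distribution with mean [m], variance
   [r] and atoms summing to [s]. *)
Definition reduced_form c (m s r : R) : R :=
  (c P4 + c P31 + c P22 + c P211 + c P1111) * m ^+ 4
  + (c P211 + c P31 + 2 * (c P22 + c P4)) * m ^+ 2 * r + (c P22 + c P4) * r ^+ 2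
  + r * (c P31 * m * s + c P4 * s ^+ 2).

Lemma two_point_value_reduced c (x1 x2 : R) w :
  two_point_value c x1 x2 w = reduced_form c (w * x1 + (1 - w) * x2) (x1 + x2)
    (w * (1 - w) * (x1 - x2) ^+ 2).
Proof. by rewrite /two_point_value /two_point_moment /reduced_form; ring. Qed.

Lemma two_point_realize (m s r : R) : 0 <= r ->
  exists x1 x2 w, [/\ 0 <= w <= 1, w * x1 + (1 - w) * x2 = m, x1 + x2 = s
                    & w * (1 - w) * (x1 - x2) ^+ 2 = r].
Proof.
move=> r_ge0; pose e := m - s / 2; pose dl := 2 * Num.sqrt (r + e ^+ 2).
have dl_ge0 : 0 <= dl by rewrite mulr_ge0 ?sqrtr_ge0.
have dl2 : dl ^+ 2 = 4 * (r + e ^+ 2).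
  by rewrite exprMn sqr_sqrtr ?addr_ge0 ?sqr_ge0 //; ring.
pose q := e / dl.
have [qdl q2] : q * dl = e /\ 4 * q ^+ 2 <= 1.
  have [dl0|dl_neq0] := eqVneq dl 0.
    have e0 : e = 0 by move: dl2; rewrite dl0 expr0n /=; nra.
    by rewrite /q dl0 e0 !mul0r expr0n /= mulr0 ler01.
  have dl_gt0 : 0 < dl by rewrite lt_def dl_neq0.
  split; first by rewrite /q divfK.
  rewrite -(ler_pM2r (exprn_gt0 2 dl_gt0)) mul1r -mulrA -exprMn.
  by rewrite /q divfK // dl2; nra.
exists ((s + dl) / 2), ((s - dl) / 2), (2^-1 + q); split.
- by apply/andP; split; nra.
- have -> : (2^-1 + q) * ((s + dl) / 2) + (1 - (2^-1 + q)) * ((s - dl) / 2)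
           = s / 2 + q * dl by field.
  by rewrite qdl /e; field.
- by field.
- have -> : (2^-1 + q) * (1 - (2^-1 + q)) * ((s + dl) / 2 - (s - dl) / 2) ^+ 2
           = dl ^+ 2 / 4 - (q * dl) ^+ 2 by field.
  by rewrite qdl dl2; field.
Qed.

Lemma inS4_reduced_form_ge0 c : inS4 c ->
  forall m s r, 0 <= r -> 0 <= reduced_form c m s r.
Proof.
move=> c_S4 m s r r_ge0.
have [x1 [x2 [w [w01 <- <- <-]]]] := two_point_realize m s r_ge0.
by rewrite -two_point_value_reduced; exact: inS4_two_point_value_ge0.
Qed.

End TwoPoint.

Section Certificate.
Variable R : realType.

Lemma quadratic_ge0_coef (a b k : R) : (forall s, 0 <= a * s ^+ 2 + b * s + k) ->
  0 <= a /\ (a = 0 -> b = 0).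
Proof.
move=> q_ge0.
have k_ge0 : 0 <= k by have := q_ge0 0; rewrite expr0n /= !mulr0 !add0r.
split=> [|a0].
  rewrite leNgt; apply/negP => a_lt0.
  pose s := (k + 1) / - a + 1.
  have s_ge1 : 1 <= s by rewrite lerDr divr_ge0 ?oppr_ge0 ?ltW //; lra.
  have as_eq : a * s = a - (k + 1) by rewrite /s; field; rewrite lt_eqF.
  have : 0 <= s * (s - 1) by apply: mulr_ge0; lra.
  have := q_ge0 s; have := q_ge0 (- s); rewrite sqrrN; nra.
apply/eqP; apply: contraT => b_neq0.
have := q_ge0 (- (k + 1) / b); rewrite a0 mul0r add0r mulrCA divff // mulr1.
lra.
Qed.

(* For [a = 0] the divisions by [a] are [0], which is consistent because then [b = 0]. *)
Lemma quadratic_vertex (a b : R) : (a = 0 -> b = 0) ->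
  b * (- b / (2 * a)) + a * (- b / (2 * a)) ^+ 2 = - (b ^+ 2 / (4 * a))
  /\ (b / 2) ^+ 2 = b ^+ 2 / (4 * a) * a.
Proof.
have [a0 /(_ a0) b0|a_neq0 _] := eqVneq a 0.
  by rewrite a0 b0; split; ring.
by split; field.
Qed.

Lemma quadratic_ge0_on_nonneg (S H D : R) : 0 <= D ->
  (forall r, 0 <= r -> 0 <= S + H * r + D * r ^+ 2) -> H < 0 -> H ^+ 2 <= 4 * S * D.
Proof.
move=> D_ge0 q_ge0 H_lt0.
have S_ge0 : 0 <= S by have := q_ge0 0 (lexx 0); rewrite expr0n /= !mulr0 !addr0.
have [D0|D_neq0] := eqVneq D 0.
  have r_ge0 : 0 <= (S + 1) / - H by apply: divr_ge0; lra.
  have := q_ge0 _ r_ge0; rewrite D0 mul0r addr0.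
  have -> : S + H * ((S + 1) / - H) = -1 by field; rewrite lt_eqF.
  by rewrite ler0N1.
have D_gt0 : 0 < D by rewrite lt_def D_neq0.
have r_ge0 : 0 <= - H / (2 * D) by apply: divr_ge0; lra.
have := q_ge0 _ r_ge0.
have -> : S + H * (- H / (2 * D)) + D * (- H / (2 * D)) ^+ 2 = S - H ^+ 2 / (4 * D).
  by field.
by rewrite subr_ge0 ler_pdivrMr ?mulr_gt0 // mulrCA mulrA.
Qed.

Lemma psd2_sym2_shift (S D y : R) : 0 <= S -> 0 <= D -> y ^+ 2 <= 4 * S * D ->
  psd2 (sym2 (S + D - y) ((y - 2 * D) / 2) D).
Proof.
move=> S_ge0 D_ge0 y2; apply/psd2_sym2; split=> //.
  have : 0 <= (S - D) ^+ 2 by exact: sqr_ge0.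
  nra.
rewrite -subr_ge0.
have -> : (S + D - y) * D - ((y - 2 * D) / 2) ^+ 2 = (4 * S * D - y ^+ 2) / 4 by field.
by rewrite divr_ge0 ?subr_ge0.
Qed.

Lemma psd_certificate (c : part4 -> R) :
  (forall m s r, 0 <= r -> 0 <= reduced_form c m s r) ->
  exists t, psd2 (sym2 (c P1111 + t) ((c P211 + c P31 - t) / 2) (c P22 + c P4))
         /\ psd2 (sym2 t (c P31 / 2) (c P4)).
Proof.
move=> red_ge0.
pose S := c P4 + c P31 + c P22 + c P211 + c P1111.
pose K := c P211 + c P31; pose D := c P22 + c P4.
have S_ge0 : 0 <= S.
  have -> : S = reduced_form c 1 0 0 by rewrite /reduced_form /S; ring.
  exact: red_ge0.
have D_ge0 : 0 <= D.
  have -> : D = reduced_form c 0 0 1 by rewrite /reduced_form /D; ring.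
  exact: red_ge0.
have red1 s r : 0 <= r ->
    0 <= S + (K + 2 * D) * r + D * r ^+ 2 + r * (c P31 * s + c P4 * s ^+ 2).
  move=> r_ge0; rewrite [X in 0 <= X](_ : _ = reduced_form c 1 s r) ?red_ge0 //.
  by rewrite /reduced_form /S /K /D; ring.
have [c4_ge0 c4_c31] : 0 <= c P4 /\ (c P4 = 0 -> c P31 = 0).
  apply: (@quadratic_ge0_coef _ _ (S + K + 3 * D)) => s; have := red1 s 1 ler01.
  by rewrite expr1n !mul1r mulr1; lra.
have [vertex_eq tB_c4] := quadratic_vertex c4_c31.
set tB := c P31 ^+ 2 / (4 * c P4) in vertex_eq tB_c4.
have tB_ge0 : 0 <= tB by rewrite divr_ge0 ?sqr_ge0 ?mulr_ge0.
have vertex r : 0 <= r -> 0 <= S + (K + 2 * D - tB) * r + D * r ^+ 2.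
  move=> r_ge0; have := red1 (- c P31 / (2 * c P4)) r r_ge0; rewrite vertex_eq.
  by have -> : S + (K + 2 * D - tB) * r + D * r ^+ 2
             = S + (K + 2 * D) * r + D * r ^+ 2 + r * - tB by ring.
(* Every [y <= H] with [y ^+ 2 <= 4 * S * D] yields psd Gram matrices. *)
pose H := K + 2 * D - tB; pose y := Num.min H 0.
have y_le : y <= H by rewrite ge_min lexx.
have y2 : y ^+ 2 <= 4 * S * D.
  rewrite /y; case: (ltP H 0) => [H_lt0 | _]; last by rewrite expr0n mulr_ge0 ?mulr_ge0.
  exact: quadratic_ge0_on_nonneg.
exists (tB + (H - y)); split.
  have -> : c P1111 + (tB + (H - y)) = S + D - y by rewrite /H /S /K /D; ring.
  have -> : c P211 + c P31 - (tB + (H - y)) = y - 2 * D by rewrite /H /K; ring.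
  exact: psd2_sym2_shift.
apply/psd2_sym2; split=> //; first by lra.
by rewrite tB_c4 ler_wpM2r //; lra.
Qed.

End Certificate.

Theorem corollary6p2 (R : realType) (c : part4 -> R) :
  inS4 c <->
  exists a11 a12 a22 b11 b12 b22 : R,
    [/\ psd2 (sym2 a11 a12 a22), psd2 (sym2 b11 b12 b22)
      & seq_eq c (combo a11 a12 a22 b11 b12 b22)].
Proof.
split=> [c_S4 | [a11 [a12 [a22 [b11 [b12 [b22 [psdA psdB c_eq]]]]]]]]; last first.
  by move=> n n_ge4; rewrite c_eq //; exact: inS4_combo.
have [t [psdA psdB]] := psd_certificate (inS4_reduced_form_ge0 c_S4).
exists (c P1111 + t), ((c P211 + c P31 - t) / 2), (c P22 + c P4), t, (c P31 / 2), (c P4).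
split=> // n _.
have combo_c l : combo (c P1111 + t) ((c P211 + c P31 - t) / 2) (c P22 + c P4)
    t (c P31 / 2) (c P4) l = c l by case: l => /=; field.
by rewrite /fseq !combo_c.
Qed.
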